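(* Let $f_w\ge1$ and $q_w\ge 2f_w+1$ be integers and let $g_1,\dots,g_{h_w}\in\mathbb{R}^d$ (correct gradients). For each $j\in\{1,\dots,m\}$ let $(y^{(j)}_1,\dots,y^{(j)}_{q_w})$ be a list of vectors of $\mathbb{R}^d$ of which at least $q_w-f_w$ entries belong to $\{g_1,\dots,g_{h_w}\}$ (the others arbitrary), and let $G_j=\mathrm{MDA}_{f_w}(y^{(j)}_1,\dots,y^{(j)}_{q_w})$. Then for each $j$ there exists $r^*(j)$ with $\|G_j-g_{r^*(j)}\|_2\le D$, where $D=\max_{r,s}\|g_r-g_s\|_2$, and consequently $$\max_{j,k\in\{1,\dots,m\}}\|G_j-G_k\|_2\le 3\max_{r,s\in\{1,\dots,h_w\}}\|g_r-g_s\|_2 .$$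
   Context: Minimum–Diameter Averaging: for integers $f\ge 0$, $q\ge 2f+1$ and vectors $x_1,\dots,x_q\in\mathbb{R}^d$, $\mathrm{MDA}_f(x_1,\dots,x_q)$ is defined as follows: among all index sets $I\subset\{1,\dots,q\}$ with $|I|=q-f$, choose one, $I^*$, minimizing $\max_{i,j\in I}\|x_i-x_j\|_2$ (ties broken arbitrarily); then $\mathrm{MDA}_f(x_1,\dots,x_q)=\frac{1}{q-f}\sum_{i\in I^*}x_i$. *)

(* R is an arbitrary real closed field (needed for sqrt);
   vectors of R^d are row vectors 'rV[R]_d. *)
From HB Require Import structures.
From mathcomp Require Import all_boot all_order all_algebra.
Set Implicit Arguments. Unset Strict Implicit. Unset Printing Implicit Defensive.
Import Order.TTheory GRing.Theory Num.Theory.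
Local Open Scope ring_scope.

Definition vnorm (R : rcfType) (d : nat) (v : 'rV[R]_d) : R :=
  Num.sqrt (\sum_(i < d) (v 0 i) ^+ 2).

(* diameter of the family (x_i)_{i in I}: max_{i,k in I} ||x_i - x_k|| (0 if I empty) *)
Definition diam (R : rcfType) (d : nat) (T : finType) (x : T -> 'rV[R]_d)
  (I : {set T}) : R :=
  \big[Num.max/0]_(i in I) \big[Num.max/0]_(k in I) vnorm (x i - x k).

(* I is an admissible choice of the index set I* in MDA_f(x_1..x_q):
   |I| = q - f and I minimizes the diameter among all such sets
   (any such minimizer may be chosen: ties broken arbitrarily). *)
Definition is_MDA_set (R : rcfType) (d q f : nat) (x : 'I_q -> 'rV[R]_d)
  (I : {set 'I_q}) : Prop :=
  #|I| = (q - f)%N /\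
  forall J : {set 'I_q}, #|J| = (q - f)%N -> diam x I <= diam x J.

Definition mda_avg (R : rcfType) (d q f : nat) (x : 'I_q -> 'rV[R]_d)
  (I : {set 'I_q}) : 'rV[R]_d :=
  ((q - f)%:R)^-1 *: \sum_(i in I) x i.

From HB Require Import structures.
From mathcomp Require Import all_boot all_order all_algebra.
From mathcomp Require Import ring lra zify.
Set Implicit Arguments. Unset Strict Implicit. Unset Printing Implicit Defensive.
Import Order.TTheory GRing.Theory Num.Theory.
Local Open Scope ring_scope.

(* Let D be the diameter of the correct gradients g.  For one
   list y of q entries, the set H of indices carrying a correct gradient has
   at least q - f elements, so it contains a set J of size q - f whose
   diameter is at most D; by minimality the chosen MDA set I has diameter at
   most D as well.  Since #|I| + #|H| >= 2(q - f) > q, the sets I and H meet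
   at some index i0, with y i0 = g r.  An average of points of I lies within
   diam I of every point of I, hence ||G - g r|| <= D.  For two outputs
   G_j, G_k close to g_r, g_s the triangle inequality through g_r and g_s
   gives ||G_j - G_k|| <= 3 D. *)

Section EuclideanNorm.
Variables (R : rcfType) (d : nat).
Implicit Types u v : 'rV[R]_d.

Definition nsq v := \sum_(i < d) (v 0 i) ^+ 2.
Definition dotp u v := \sum_(i < d) (u 0 i * v 0 i).

Lemma nsq_ge0 v : 0 <= nsq v.
Proof. by apply: sumr_ge0 => i _; rewrite sqr_ge0. Qed.

Lemma lagrange_identity u v :
  \sum_(i < d) \sum_(j < d) (u 0 i * v 0 j - u 0 j * v 0 i) ^+ 2 =
  2 * (nsq u * nsq v) - 2 * dotp u v ^+ 2.
Proof.
set a := fun i => u 0 i; set b := fun i => v 0 i.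
have -> : \sum_(i < d) \sum_(j < d) (a i * b j - a j * b i) ^+ 2 =
    \sum_(i < d) \sum_(j < d) (a i ^+ 2 * b j ^+ 2) +
    \sum_(i < d) \sum_(j < d) (a j ^+ 2 * b i ^+ 2) -
    2 * \sum_(i < d) \sum_(j < d) ((a i * b i) * (a j * b j)).
  rewrite mulr_sumr -big_split -sumrB /=; apply: eq_bigr => i _.
  rewrite mulr_sumr -big_split -sumrB /=; apply: eq_bigr => j _.
  ring.
rewrite [X in _ + X - _]exchange_big /=.
have -> : \sum_(i < d) \sum_(j < d) (a i ^+ 2 * b j ^+ 2) = nsq u * nsq v.
  by rewrite /nsq big_distrl /=; apply: eq_bigr => i _; rewrite big_distrr.
have -> : \sum_(i < d) \sum_(j < d) ((a i * b i) * (a j * b j)) = dotp u v ^+ 2.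
  by rewrite /dotp expr2 big_distrl /=; apply: eq_bigr => i _; rewrite big_distrr.
ring.
Qed.

Lemma cauchy_schwarz u v : dotp u v ^+ 2 <= nsq u * nsq v.
Proof.
have : 0 <= \sum_(i < d) \sum_(j < d) (u 0 i * v 0 j - u 0 j * v 0 i) ^+ 2.
  by apply: sumr_ge0 => i _; apply: sumr_ge0 => j _; rewrite sqr_ge0.
rewrite lagrange_identity; lra.
Qed.

Lemma vnorm_ge0 v : 0 <= vnorm v.
Proof. exact: sqrtr_ge0. Qed.

Lemma vnorm_sq v : vnorm v ^+ 2 = nsq v.
Proof. by rewrite /vnorm sqr_sqrtr // nsq_ge0. Qed.

Lemma dotp_le u v : dotp u v <= vnorm u * vnorm v.
Proof.
rewrite /vnorm -sqrtrM ?nsq_ge0 //.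
apply: (le_trans (ler_norm _)).
by rewrite -sqrtr_sqr ler_wsqrtr // cauchy_schwarz.
Qed.

Lemma nsqD u v : nsq (u + v) = nsq u + nsq v + 2 * dotp u v.
Proof.
rewrite /nsq /dotp mulr_sumr -!big_split /=; apply: eq_bigr => i _.
rewrite !mxE; ring.
Qed.

Lemma vnormD u v : vnorm (u + v) <= vnorm u + vnorm v.
Proof.
have h0 := vnorm_ge0 u; have h1 := vnorm_ge0 v.
rewrite -[vnorm u + vnorm v]ger0_norm ?addr_ge0 // -sqrtr_sqr.
rewrite {1}/vnorm ler_wsqrtr // -/(nsq _) nsqD -!vnorm_sq.
have := dotp_le u v; nra.
Qed.

Lemma vnormZ c v : vnorm (c *: v) = `|c| * vnorm v.
Proof.
rewrite /vnorm -sqrtr_sqr -sqrtrM ?sqr_ge0 //; congr Num.sqrt.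
rewrite mulr_sumr; apply: eq_bigr => i _; rewrite !mxE; ring.
Qed.

Lemma vnormB u v : vnorm (u - v) = vnorm (v - u).
Proof. by rewrite -opprB -scaleN1r vnormZ normrN normr1 mul1r. Qed.

Lemma vnorm0 : vnorm (0 : 'rV[R]_d) = 0.
Proof. by rewrite /vnorm big1 ?sqrtr0 // => i _; rewrite mxE expr0n. Qed.

Lemma vnorm_sum (T : finType) (P : pred T) (F : T -> 'rV[R]_d) :
  vnorm (\sum_(i | P i) F i) <= \sum_(i | P i) vnorm (F i).
Proof.
elim/big_rec2: _ => [|i y1 y2 _ H]; first by rewrite vnorm0.
by apply: (le_trans (vnormD _ _)); rewrite lerD2l.
Qed.

Lemma vnorm_three_legs u w z v :
  vnorm (u - v) <= vnorm (u - w) + vnorm (w - z) + vnorm (z - v).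
Proof.
have -> : u - v = (u - w) + (w - z) + (z - v) by rewrite !addrA !subrK.
by rewrite (le_trans (vnormD _ _)) // lerD2r vnormD.
Qed.

End EuclideanNorm.

Section Diameter.
Variables (R : rcfType) (d : nat) (T : finType) (x : T -> 'rV[R]_d).
Implicit Types I J : {set T}.

Lemma diam_ge0 I : 0 <= diam x I.
Proof. exact: bigmax_ge_id. Qed.

Lemma dist_le_diam I i k : i \in I -> k \in I -> vnorm (x i - x k) <= diam x I.
Proof. by move=> iI kI; apply: (bigmax_sup i) => //; apply: (bigmax_sup k). Qed.

Lemma diam_le I c :
  0 <= c -> {in I &, forall i k, vnorm (x i - x k) <= c} -> diam x I <= c.
Proof.
move=> c0 hc; apply: bigmax_le => // i iI.
by apply: bigmax_le => // k kI; apply: hc.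
Qed.

Lemma diam_setT :
  diam x [set: T] = \big[Num.max/0]_i \big[Num.max/0]_k vnorm (x i - x k).
Proof.
rewrite /diam (eq_bigl predT) => [|i]; last by rewrite inE.
by apply: eq_bigr => i _; rewrite (eq_bigl predT) // => k; rewrite inE.
Qed.

Lemma avg_near_member I (n : nat) i0 :
  #|I| = n -> (0 < n)%N -> i0 \in I ->
  vnorm ((n%:R)^-1 *: \sum_(i in I) x i - x i0) <= diam x I.
Proof.
move=> cI n0 i0I.
have nz : n%:R != 0 :> R by rewrite pnatr_eq0 -lt0n.
have n1_ge0 : 0 <= (n%:R : R)^-1 by rewrite invr_ge0 ler0n.
have -> : (n%:R)^-1 *: \sum_(i in I) x i - x i0 =
          (n%:R)^-1 *: \sum_(i in I) (x i - x i0).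
  rewrite sumrB sumr_const cI -scaler_nat scalerBr scalerA.
  by rewrite mulVf // scale1r.
rewrite vnormZ ger0_norm //.
apply: (le_trans (ler_wpM2l n1_ge0 (vnorm_sum _ _))).
have hs : \sum_(i in I) vnorm (x i - x i0) <= \sum_(i in I) diam x I.
  by apply: ler_sum => i iI; apply: dist_le_diam.
apply: (le_trans (ler_wpM2l n1_ge0 hs)).
by rewrite sumr_const cI -[diam x I *+ n]mulr_natr mulrCA mulVf // mulr1.
Qed.

End Diameter.

Lemma exists_subset_card (T : finType) (A : {set T}) (n : nat) :
  (n <= #|A|)%N -> exists2 B : {set T}, B \subset A & #|B| = n.
Proof.
elim: n => [|n IH] hn; first by exists set0; rewrite ?sub0set ?cards0.
have [B sBA cB] := IH (ltnW hn).
have : (0 < #|A :\: B|)%N by rewrite cardsD (setIidPr sBA); lia.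
rewrite card_gt0 => /set0Pn [z]; rewrite in_setD => /andP [zB zA].
exists (z |: B); first by rewrite subUset sub1set zA.
by rewrite cardsU1 zB cB.
Qed.

Lemma large_sets_meet (T : finType) (A B : {set T}) :
  (#|T| < #|A| + #|B|)%N -> exists z, z \in A :&: B.
Proof.
move=> hAB; apply/set0Pn; rewrite -card_gt0.
have := cardsUI A B; have := max_card (A :|: B); lia.
Qed.

Section SingleList.
Variables (R : rcfType) (d f q h : nat).
Variables (g : 'I_h -> 'rV[R]_d) (y : 'I_q -> 'rV[R]_d).

Definition correct_idx : {set 'I_q} := [set i | [exists r, y i == g r]].

Hypothesis many_correct : (q - f <= #|correct_idx|)%N.

Lemma mda_set_diam_le I : is_MDA_set f y I -> diam y I <= diam g [set: 'I_h].
Proof.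
move=> [_ minI].
have [J sJ cJ] := exists_subset_card many_correct.
apply: (le_trans (minI J cJ)); apply: diam_le; first exact: diam_ge0.
move=> i k /(subsetP sJ) + /(subsetP sJ); rewrite !inE.
move=> /existsP [r /eqP ->] /existsP [s /eqP ->].
by apply: dist_le_diam; rewrite inE.
Qed.

Lemma mda_near_correct I :
  (2 * f + 1 <= q)%N -> is_MDA_set f y I ->
  exists r, vnorm (mda_avg f y I - g r) <= diam g [set: 'I_h].
Proof.
move=> hq mdaI; have [cI _] := mdaI.
have [i0] : exists i0, i0 \in I :&: correct_idx.
  by apply: large_sets_meet; rewrite card_ord cI; lia.
rewrite in_setI inE => /andP [i0I /existsP [r /eqP yi0]].
exists r; rewrite -yi0; apply: le_trans (mda_set_diam_le mdaI).
by apply: avg_near_member => //; lia.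
Qed.

End SingleList.

Theorem mainTheorem8 (R : rcfType) (d fw qw hw m : nat)
  (g : 'I_hw -> 'rV[R]_d)
  (y : 'I_m -> 'I_qw -> 'rV[R]_d)
  (I : 'I_m -> {set 'I_qw}) :
  (1 <= fw)%N ->
  (2 * fw + 1 <= qw)%N ->
  (forall j : 'I_m,
      (qw - fw <= #|[set i : 'I_qw | [exists r : 'I_hw, y j i == g r]]|)%N) ->
  (forall j : 'I_m, is_MDA_set fw (y j) (I j)) ->
  let G := fun j : 'I_m => mda_avg fw (y j) (I j) in
  let D := \big[Num.max/0]_(r < hw) \big[Num.max/0]_(s < hw) vnorm (g r - g s) in
  (forall j : 'I_m, exists r : 'I_hw, vnorm (G j - g r) <= D) /\
  \big[Num.max/0]_(j < m) \big[Num.max/0]_(k < m) vnorm (G j - G k) <= 3 * D.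
Proof.
move=> _ hq hcorrect hmda G D.
have DE : D = diam g [set: 'I_hw] by rewrite diam_setT.
have near : forall j, exists r, vnorm (G j - g r) <= D.
  move=> j; rewrite DE /G.
  have hnear := mda_near_correct (hcorrect j) hq (hmda j); exact hnear.
split=> //; rewrite -diam_setT; apply: diam_le.
  by rewrite DE mulr_ge0 ?diam_ge0.
move=> j k _ _; have [r hr] := near j; have [s hs] := near k.
have hrs : vnorm (g r - g s) <= D by rewrite DE dist_le_diam ?inE.
apply: le_trans (vnorm_three_legs _ (g r) (g s) _) _.
rewrite vnormB in hs; lra.
Qed.
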